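(* Let $F=\begin{pmatrix}-1&-1&-1\\-1&8&-1\\-1&-1&-1\end{pmatrix}$ (edge detect C filter). Then the equation $F*X=B$ with the zero boundary condition, for unknown $X\in\mathbb{R}^{m\times n}$, has a unique solution for every $B\in\mathbb{R}^{m\times n}$ (for all $m,n\in\mathbb{N}$).
   Context: For $F=[f_{ij}]\in\mathbb{R}^{3\times3}$ and $X=[x_{ij}]\in\mathbb{R}^{m\times n}$, the convolution $F*X\in\mathbb{R}^{m\times n}$ is defined by $[F*X]_{ij}=\sum_{l_1=1}^3\sum_{l_2=1}^3 f_{l_1l_2}\,x_{i-l_1+2,\,j-l_2+2}$ for $1\le i\le m$, $1\le j\le n$, where under the zero boundary condition all values $x_{ij}$ with $i\in\{0,m+1\}$ or $j\in\{0,n+1\}$ are $0$. *)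

From mathcomp Require Import all_boot all_order all_algebra.
From mathcomp Require Import reals.
Set Implicit Arguments. Unset Strict Implicit. Unset Printing Implicit Defensive.
Import Order.TTheory GRing.Theory Num.Theory.
Local Open Scope ring_scope.

(* Indices are 0-based: row i : 'I_m corresponds to the paper's row i+1. *)

(* Entry of X at (0-based, possibly out-of-range) integer position (a, b);
   zero boundary condition: out-of-range entries are 0. *)
Definition xget (R : pzRingType) (m n : nat) (X : 'M[R]_(m, n)) (a b : int) : R :=
  match a, b with
  | Posz a', Posz b' =>
      (if insub a' : option 'I_m is Some i then
         if insub b' : option 'I_n is Some j then X i j else 0
       else 0)
  | _, _ => 0
  end.

(* [F*X]_{ij} = sum_{l1,l2 in 1..3} f_{l1 l2} x_{i-l1+2, j-l2+2}; in 0-based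
   indices (i, j, l1, l2 shifted by one) the X-index is (i - l1 + 1, j - l2 + 1). *)
Definition conv (R : pzRingType) (m n : nat) (F : 'M[R]_3) (X : 'M[R]_(m, n))
  : 'M[R]_(m, n) :=
  \matrix_(i < m, j < n)
     \sum_(l1 < 3) \sum_(l2 < 3)
        F l1 l2 * xget X (i%:Z - l1%:Z + 1) (j%:Z - l2%:Z + 1).

Definition edgeC (R : pzRingType) : 'M[R]_3 :=
  \matrix_(i < 3, j < 3) (if (i == 1 :> nat) && (j == 1 :> nat) then 8 else -1).

(* The filter is weakly diagonally dominant: its centre 8 equals the sum of the
   moduli of the other eight entries.  By linearity it suffices that F*X = 0
   forces X = 0.  Let M be the largest |x_ij| and suppose M > 0.  At each (i, j)
   the equation 8 x_ij = (sum of the eight neighbours) gives |x_ij| < M as soon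
   as one neighbour is strictly below M; the neighbour above lies in the zero
   boundary for the first row, so induction on the rows shows every |x_ij| < M,
   a contradiction.  An injective linear endomorphism of the finite-dimensional
   space of m x n matrices is bijective. *)

From HB Require Import structures.
From mathcomp Require Import all_boot all_order all_algebra.
From mathcomp Require Import reals zify.
Set Implicit Arguments.
Unset Strict Implicit.
Import Order.TTheory GRing.Theory Num.Theory.
Local Open Scope ring_scope.

Section ZeroBoundary.
Variables (R : pzRingType) (m n : nat).
Implicit Type X : 'M[R]_(m, n).

Lemma xget_ord X (i : 'I_m) (j : 'I_n) : xget X i j = X i j.
Proof. by rewrite /xget !valK. Qed.

Lemma xget_neg1 X b : xget X (-1) b = 0.
Proof. by []. Qed.

Lemma xget_scaleD X Y a b (c : R) :
  xget (c *: X + Y) a b = c * xget X a b + xget Y a b.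
Proof.
case: a b => [a|a] [b|b]; rewrite /xget ?mulr0 ?addr0 //.
by case: (insub a : option 'I_m) => [i|]; case: (insub b : option 'I_n) => [j|];
  rewrite ?mxE ?mulr0 ?addr0.
Qed.

Lemma conv_pairE (F : 'M[R]_3) X i j :
  conv F X i j =
  \sum_(p : 'I_3 * 'I_3) F p.1 p.2 * xget X (i%:Z - p.1%:Z + 1) (j%:Z - p.2%:Z + 1).
Proof. by rewrite mxE pair_big. Qed.

End ZeroBoundary.

Lemma xget_norm_le (R : numDomainType) m n (X : 'M[R]_(m, n)) (M : R) a b :
  0 <= M -> (forall i j, `|X i j| <= M) -> `|xget X a b| <= M.
Proof.
move=> M_ge0 X_le; case: a b => [a|a] [b|b]; rewrite /xget ?normr0 //.
by case: (insub a : option 'I_m) => [i|]; case: (insub b : option 'I_n) => [j|];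
  rewrite ?normr0.
Qed.

Section ConvLinear.
Variables (R : comPzRingType) (m n : nat) (F : 'M[R]_3).

Lemma conv_is_linear : linear (@conv R m n F).
Proof.
move=> c X Y; apply/matrixP => i j; rewrite !mxE mulr_sumr -big_split.
apply: eq_bigr => k _; rewrite mulr_sumr -big_split; apply: eq_bigr => l _.
by rewrite xget_scaleD mulrDr mulrCA.
Qed.

HB.instance Definition _ :=
  GRing.isLinear.Build R 'M[R]_(m, n) 'M[R]_(m, n) _ (@conv R m n F)
    conv_is_linear.

End ConvLinear.

Lemma linear_inj_exists_unique (K : fieldType) m n
    (f : {linear 'M[K]_(m, n) -> 'M[K]_(m, n)}) :
  injective f -> forall B, exists! X, f X = B.
Proof.
move=> f_inj B; pose A := lin_mx f.
have A_unit : A \in unitmx.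
  rewrite -row_free_unit; apply: inj_row_free => v; rewrite mul_rV_lin.
  move/eqP; rewrite mxvec_eq0 -(linear0 f) => /eqP/f_inj/eqP.
  by rewrite vec_mx_eq0 => /eqP.
exists (vec_mx (mxvec B *m invmx A)); split=> [|X <-].
  by apply: (can_inj mxvecK); rewrite -mul_rV_lin mulmxKV.
by apply: f_inj; apply: (can_inj mxvecK); rewrite -mul_rV_lin mulmxKV.
Qed.

Section DominantFilter.
Variables (R : realDomainType) (m n : nat) (F : 'M[R]_3).
Hypothesis F_dominant :
  \sum_(p : 'I_3 * 'I_3 | p != (1, 1)) `|F p.1 p.2| <= `|F 1 1|.
(* [F 2 1] is the weight of the neighbour x_(i-1, j) in [conv F X i j]. *)
Hypothesis F_up_neq0 : F 2 1 != 0.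

Lemma conv_eq0_entry_lt (X : 'M[R]_(m, n)) (M : R) i j :
  0 <= M -> (forall i j, `|X i j| <= M) -> conv F X i j = 0 ->
  `|xget X (i%:Z - 1) j| < M -> `|X i j| < M.
Proof.
move=> M_ge0 X_le convX0 up_lt.
pose x (p : 'I_3 * 'I_3) := xget X (i%:Z - p.1%:Z + 1) (j%:Z - p.2%:Z + 1).
have x_le p : `|x p| <= M by apply: xget_norm_le.
have x_center : x (1, 1) = X i j by rewrite /x !subrK xget_ord.
have x_up : x (2, 1) = xget X (i%:Z - 1) j.
  by rewrite /x /= subrK; congr xget; lia.
have center_lt : `|F 1 1| * `|X i j| < `|F 1 1| * M.
  have convE : conv F X i j = \sum_p F p.1 p.2 * x p := conv_pairE F X i j.
  move: convX0; rewrite convE (bigD1 (1, 1)) //= x_center => /eqP.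
  rewrite addr_eq0 => /eqP center_eq.
  rewrite -normrM center_eq normrN.
  apply: (le_lt_trans (ler_norm_sum _ _ _)).
  apply: (lt_le_trans _ (ler_wpM2r M_ge0 F_dominant)); rewrite mulr_suml.
  rewrite (bigD1 (2, 1)) //= [ltRHS](bigD1 (2, 1)) //= normrM x_up.
  apply: ltr_leD; first by rewrite ltr_pM2l ?normr_gt0.
  by apply: ler_sum => p _; rewrite normrM ler_wpM2l.
rewrite ltNge; apply: contraTN center_lt => /(ler_wpM2l (normr_ge0 (F 1 1))).
by rewrite -leNgt.
Qed.

Lemma conv_eq0 (X : 'M[R]_(m, n)) : conv F X = 0 -> X = 0.
Proof.
move=> convX0; pose M := \big[Num.max/0]_(p : 'I_m * 'I_n) `|X p.1 p.2|.
have X_le i j : `|X i j| <= M by rewrite /M (le_bigmax _ _ (i, j)).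
have [M_gt0|M_le0] := ltrP 0 M; last first.
  apply/matrixP => i j; rewrite mxE; apply/eqP; rewrite -normr_le0.
  exact: le_trans (X_le i j) M_le0.
have row_lt k (k_lt : (k < m)%N) j : `|X (Ordinal k_lt) j| < M.
  elim: k k_lt => [|k IHk] k_lt;
    apply: (conv_eq0_entry_lt (ltW M_gt0) X_le); rewrite ?convX0 ?mxE //.
    by rewrite xget_neg1 normr0.
  have -> : k.+1%:Z - 1 = k by lia.
  by rewrite (xget_ord X (Ordinal (ltnW k_lt))).
have : M < M by apply/bigmax_ltP; split=> // -[[i i_lt] j] _; exact: row_lt.
by rewrite ltxx.
Qed.

Lemma conv_inj : injective (@conv R m n F).
Proof.
move=> X Y /eqP; rewrite -subr_eq0 -linearB => /eqP/conv_eq0/eqP.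
by rewrite subr_eq0 => /eqP.
Qed.

End DominantFilter.

Lemma edgeC_offcenter (R : numDomainType) (p : 'I_3 * 'I_3) :
  p != (1, 1) -> edgeC R p.1 p.2 = -1.
Proof.
case: p => a b /eqP ab_neq; rewrite mxE; case: ifP => // /andP[/eqP a1 /eqP b1].
by case: ab_neq; congr pair; apply: val_inj.
Qed.

Lemma edgeC_dominant (R : numDomainType) :
  \sum_(p : 'I_3 * 'I_3 | p != (1, 1)) `|edgeC R p.1 p.2| <= `|edgeC R 1 1|.
Proof.
rewrite (eq_bigr (fun _ => 1)) => [|p /edgeC_offcenter ->]; last exact: normrN1.
by rewrite sumr_const cardC1 card_prod card_ord mxE /= normr_nat.
Qed.

Theorem corollary13 (R : realType) (m n : nat) (B : 'M[R]_(m, n)) :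
  exists! X : 'M[R]_(m, n), conv (edgeC R) X = B.
Proof.
apply: linear_inj_exists_unique; apply: conv_inj; first exact: edgeC_dominant.
by rewrite mxE /= oppr_eq0 oner_eq0.
Qed.
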